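(* Let $\mathbb{X}$ be a real or complex Banach algebra with identity, $\mathcal{G}$ its group of units, $k\ge1$ an integer, and $g_n:\mathbb{X}\to\mathbb{X}$ ($n\ge0$) functions with $|g_n(\xi)|\le\sigma|\xi|$ for all $\xi\in\mathbb{X}$, all $n$, for some real $\sigma>0$. Let $a\in\mathcal{G}$ and $b_0,\dots,b_k\in\mathbb{X}$ with $b_k\ne0$. If $|a|<1$, $$b_0a^k+b_1a^{k-1}+\cdots+b_{k-1}a+b_k=0,$$ and $$\sum_{i=0}^{k-1}\big|b_0a^i+b_1a^{i-1}+\cdots+b_i\big|<\frac1\sigma,$$ then every solution of $$x_{n+1}=ax_n+g_n\big(b_0x_n+b_1x_{n-1}+\cdots+b_kx_{n-k}\big),\quad n\ge0,$$ with initial values in $\mathbb{X}$ converges to $0$.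
   Context: A Banach algebra with identity is a Banach space $\mathbb{X}$ (norm $|\cdot|$) with an associative bilinear multiplication satisfying $|xy|\le|x||y|$ and identity $1$ with $|1|=1$; $\mathcal{G}$ is the set of invertible elements. *)

From Stdlib Require Export Reals.
Open Scope R_scope.

(* A real Banach algebra with identity (a complex Banach algebra is in
   particular a real one, with the same norm, by restriction of scalars). *)
Record BanachAlgebra := {
  carrier :> Type;
  add : carrier -> carrier -> carrier;
  opp : carrier -> carrier;
  zero : carrier;
  scal : R -> carrier -> carrier;
  mul : carrier -> carrier -> carrier;
  one : carrier;
  norm : carrier -> R;
  add_assoc : forall x y z, add x (add y z) = add (add x y) z;
  add_comm : forall x y, add x y = add y x;
  add_0_l : forall x, add zero x = x;
  add_opp_l : forall x, add (opp x) x = zero;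
  scal_assoc : forall r s x, scal r (scal s x) = scal (r * s) x;
  scal_1 : forall x, scal 1 x = x;
  scal_add_l : forall r s x, scal (r + s) x = add (scal r x) (scal s x);
  scal_add_r : forall r x y, scal r (add x y) = add (scal r x) (scal r y);
  mul_assoc : forall x y z, mul x (mul y z) = mul (mul x y) z;
  mul_1_l : forall x, mul one x = x;
  mul_1_r : forall x, mul x one = x;
  mul_add_l : forall x y z, mul (add x y) z = add (mul x z) (mul y z);
  mul_add_r : forall x y z, mul x (add y z) = add (mul x y) (mul x z);
  mul_scal_l : forall r x y, mul (scal r x) y = scal r (mul x y);
  mul_scal_r : forall r x y, mul x (scal r y) = scal r (mul x y);
  norm_zero_iff : forall x, norm x = 0 <-> x = zero;
  norm_triangle : forall x y, norm (add x y) <= norm x + norm y;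
  norm_scal : forall r x, norm (scal r x) = Rabs r * norm x;
  norm_mul : forall x y, norm (mul x y) <= norm x * norm y;
  norm_one : norm one = 1;
  complete : forall u : nat -> carrier,
    (forall eps, eps > 0 -> exists N, forall m n, (m >= N)%nat -> (n >= N)%nat ->
        norm (add (u m) (opp (u n))) < eps) ->
    exists l, forall eps, eps > 0 -> exists N, forall n, (n >= N)%nat ->
        norm (add (u n) (opp l)) < eps
}.

Arguments add {b}. Arguments opp {b}. Arguments zero {b}. Arguments scal {b}.
Arguments mul {b}. Arguments one {b}. Arguments norm {b}.

Definition invertible {X : BanachAlgebra} (a : X) : Prop :=
  exists y : X, mul a y = one /\ mul y a = one.

Fixpoint powX {X : BanachAlgebra} (a : X) (n : nat) : X :=
  match n with O => one | S m => mul a (powX a m) end.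

Fixpoint sumX {X : BanachAlgebra} (f : nat -> X) (n : nat) : X :=
  match n with O => zero | S m => add (sumX f m) (f m) end.

(* Idea: write x_{m+1} = a x_m + d_m, with the defect d_m.  Expanding
   x_{m+j} in terms of x_m and defects (summation by parts) gives
     sum_{j<=k} b_j x_{m+k-j} = c_k x_m + sum_{i<k} c_i d_{m+k-1-i},
   and c_k = 0 removes the first term.  So |d_{n+k}| <= sum_{i<k} w_i |d_{n+k-1-i}|
   with weights w_i = sigma |c_i| of total mass < 1. *)

From Stdlib Require Import Reals Lra Lia Arith.
Open Scope R_scope.

Fixpoint sumR (f : nat -> R) (n : nat) : R :=
  match n with O => 0 | S m => sumR f m + f m end.

Lemma sumR_sum_f_R0 (f : nat -> R) (n : nat) : sum_f_R0 f n = sumR f (S n).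
Proof. induction n as [|n IH]; simpl; [lra | now rewrite IH]. Qed.

Lemma sumR_le (f g : nat -> R) (n : nat) :
  (forall i, (i < n)%nat -> f i <= g i) -> sumR f n <= sumR g n.
Proof.
  induction n as [|n IH]; intro H; simpl; [lra|].
  apply Rplus_le_compat; auto.
Qed.

Lemma sumR_nonneg (f : nat -> R) (n : nat) :
  (forall i, (i < n)%nat -> 0 <= f i) -> 0 <= sumR f n.
Proof.
  induction n as [|n IH]; intro H; simpl; [lra|].
  pose proof (H n (Nat.lt_succ_diag_r n)).
  pose proof (IH (fun i h => H i (Nat.lt_lt_succ_r _ _ h))). lra.
Qed.

Lemma sumR_term (f : nat -> R) (n j : nat) :
  (forall i, (i < n)%nat -> 0 <= f i) -> (j < n)%nat -> f j <= sumR f n.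
Proof.
  induction n as [|n IH]; intros H Hj; [lia|]; simpl.
  assert (Hn : 0 <= f n) by auto.
  destruct (Nat.eq_dec j n) as [->|Hjn].
  - pose proof (sumR_nonneg f n (fun i h => H i (Nat.lt_lt_succ_r _ _ h))). lra.
  - pose proof (IH (fun i h => H i (Nat.lt_lt_succ_r _ _ h)) ltac:(lia)). lra.
Qed.

Lemma sumR_scal_l (c : R) (f : nat -> R) (n : nat) :
  sumR (fun i => c * f i) n = c * sumR f n.
Proof. induction n as [|n IH]; simpl; [ring | rewrite IH; ring]. Qed.

Lemma sumR_scal_r (f : nat -> R) (c : R) (n : nat) :
  sumR (fun i => f i * c) n = sumR f n * c.
Proof. induction n as [|n IH]; simpl; [ring | rewrite IH; ring]. Qed.

Lemma bernoulli_ineq (t : R) (n : nat) : 0 <= t <= 1 -> 1 - INR n * t <= (1 - t) ^ n.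
Proof.
  intro Ht. induction n as [|n IH]; [simpl; lra|].
  rewrite S_INR, <- tech_pow_Rmult.
  assert (0 <= (1 - t) ^ n) by (apply pow_le; lra).
  assert (0 <= INR n) by apply pos_INR. nra.
Qed.

(* For every theta in [0,1) and k >= 1 there is rho in (0,1) with theta <= rho^k:
   the decay rate of a k-step delay recursion with total weight theta. *)
Lemma root_rate_exists (theta : R) (k : nat) :
  0 <= theta < 1 -> (1 <= k)%nat -> exists rho, 0 < rho < 1 /\ theta <= rho ^ k.
Proof.
  intros Hth Hk.
  assert (HkR : 1 <= INR k) by (apply (le_INR 1); exact Hk).
  set (t := (1 - theta) / (2 * INR k)).
  assert (Ht : 0 < t /\ INR k * t = (1 - theta) / 2).
  { split; unfold t; [apply Rdiv_lt_0_compat; lra | field; lra]. }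
  assert (Ht1 : t <= 1 / 2) by nra.
  exists (1 - t). split; [lra|].
  eapply Rle_trans; [|apply bernoulli_ineq; lra]. lra.
Qed.

Definition geometric_decay (u : nat -> R) : Prop :=
  exists D beta, 0 <= beta < 1 /\ forall m, u m <= D * beta ^ m.

Lemma geometric_decay_cv (u : nat -> R) :
  (forall m, 0 <= u m) -> geometric_decay u -> Un_cv u 0.
Proof.
  intros Hu (D & beta & Hbeta & Hbound) eps Heps.
  assert (HD : 0 <= D) by (pose proof (Hbound 0%nat); pose proof (Hu 0%nat); simpl in *; lra).
  destruct (pow_lt_1_zero beta ltac:(rewrite Rabs_right; lra) (eps / (D + 1)))
    as [N HN]; [apply Rdiv_lt_0_compat; lra|].
  exists N. intros n Hn. specialize (HN n Hn).
  assert (Hpow : 0 <= beta ^ n) by (apply pow_le; lra).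
  rewrite Rabs_right in HN by lra.
  unfold R_dist. rewrite Rminus_0_r, Rabs_right by (apply Rle_ge, Hu).
  apply (Rmult_lt_compat_l (D + 1)) in HN; [|lra].
  replace ((D + 1) * (eps / (D + 1))) with eps in HN by (field; lra).
  pose proof (Hbound n). nra.
Qed.

Lemma delay_inequality_decay (e w : nat -> R) (k : nat) :
  (1 <= k)%nat ->
  (forall m, 0 <= e m) -> (forall i, 0 <= w i) -> sumR w k < 1 ->
  (forall n, e (n + k)%nat <= sumR (fun i => w i * e (n + (k - S i))%nat) k) ->
  geometric_decay e.
Proof.
  intros Hk He Hw HW Hrec.
  assert (HW0 : 0 <= sumR w k) by (apply sumR_nonneg; auto).
  destruct (root_rate_exists (sumR w k) k (conj HW0 HW) Hk) as (rho & Hrho & Hrhok).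
  assert (Hpos : forall m, 0 < rho ^ m) by (intro; apply pow_lt; lra).
  set (C := sumR (fun j => e j / rho ^ j) k).
  assert (Hterm : forall j, 0 <= e j / rho ^ j).
  { intro j. unfold Rdiv. apply Rmult_le_pos; [auto|].
    left. apply Rinv_0_lt_compat, Hpos. }
  assert (HC : 0 <= C) by (apply sumR_nonneg; auto).
  exists C, rho. split; [lra|].
  intro m. induction m as [m IH] using lt_wf_ind.
  destruct (Nat.lt_ge_cases m k) as [Hm|Hm].
  - (* initial window: each e m / rho^m is one term of C *)
    pose proof (sumR_term (fun j => e j / rho ^ j) k m (fun i _ => Hterm i) Hm) as Hmc.
    apply (Rmult_le_compat_r (rho ^ m)) in Hmc; [|left; apply Hpos].
    unfold Rdiv in Hmc. rewrite Rmult_assoc, Rinv_l, Rmult_1_r in Hmc by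
      (apply Rgt_not_eq, Hpos). exact Hmc.
  - (* recursive step: all delayed terms are <= C rho^n, total weight <= rho^k *)
    replace m with (m - k + k)%nat by lia. set (n := (m - k)%nat).
    eapply Rle_trans; [apply Hrec|].
    apply Rle_trans with (sumR (fun i => w i * (C * rho ^ n)) k).
    + apply sumR_le. intros i Hi. apply Rmult_le_compat_l; [auto|].
      eapply Rle_trans; [apply IH; lia|].
      apply Rmult_le_compat_l; [exact HC|].
      rewrite pow_add. pose proof (Hpos n).
      assert (rho ^ (k - S i) <= 1) by
        (rewrite <- (pow1 (k - S i)); apply pow_incr; lra).
      nra.
    + rewrite sumR_scal_r, pow_add.
      replace (C * (rho ^ n * rho ^ k)) with (rho ^ k * (C * rho ^ n)) by ring.
      apply Rmult_le_compat_r; [apply Rmult_le_pos; [exact HC | left; apply Hpos] | exact Hrhok].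
Qed.

Lemma perturbed_contraction_decay (u v : nat -> R) (alpha : R) :
  0 <= alpha < 1 -> (forall m, 0 <= u m) -> (forall m, 0 <= v m) ->
  geometric_decay v -> (forall m, u (S m) <= alpha * u m + v m) ->
  geometric_decay u.
Proof.
  intros Halpha Hu Hv (C & rho & Hrho & Hvb) Hstep.
  assert (HC : 0 <= C) by (pose proof (Hv 0%nat); pose proof (Hvb 0%nat); simpl in *; lra).
  set (beta := (1 + Rmax alpha rho) / 2).
  assert (Hbeta : alpha < beta /\ rho < beta /\ beta < 1).
  { pose proof (Rmax_l alpha rho). pose proof (Rmax_r alpha rho).
    assert (Rmax alpha rho < 1) by (apply Rmax_lub_lt; lra). unfold beta. lra. }
  set (D := u 0%nat + C / (beta - alpha)).
  assert (HCD : C = (D - u 0%nat) * (beta - alpha)) by (unfold D; field; lra).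
  assert (HD : u 0%nat <= D) by nra.
  exists D, beta. split; [lra|].
  induction m as [|m IH]; [simpl; lra|].
  assert (Hpow : 0 <= rho ^ m <= beta ^ m) by (split; [|apply pow_incr]; try apply pow_le; lra).
  eapply Rle_trans; [apply Hstep|]. simpl.
  assert (HCle : C <= D * (beta - alpha)) by (pose proof (Hu 0%nat); nra).
  assert (alpha * u m <= alpha * (D * beta ^ m)) by (apply Rmult_le_compat_l; lra).
  assert (v m <= C * beta ^ m).
  { eapply Rle_trans; [apply Hvb|]. apply Rmult_le_compat_l; lra. }
  assert (C * beta ^ m <= D * (beta - alpha) * beta ^ m) by (apply Rmult_le_compat_r; lra).
  nra.
Qed.

Section BanachAlgebraFacts.
Context {X : BanachAlgebra}.
Implicit Types x y z : X.

Lemma add_0_r x : add x zero = x.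
Proof. rewrite add_comm; apply add_0_l. Qed.

Lemma add_opp_r x : add x (opp x) = zero.
Proof. rewrite add_comm; apply add_opp_l. Qed.

Lemma add_cancel_l x y z : add x y = add x z -> y = z.
Proof.
  intro H. rewrite <- (add_0_l _ y), <- (add_0_l _ z), <- (add_opp_l _ x).
  rewrite <- !add_assoc, H. reflexivity.
Qed.

Lemma mul_0_l y : mul zero y = zero.
Proof.
  apply (add_cancel_l (mul zero y)). rewrite <- mul_add_l, add_0_l, add_0_r. reflexivity.
Qed.

Lemma scal_0 y : scal 0 y = zero.
Proof.
  apply (add_cancel_l (scal 0 y)). rewrite <- scal_add_l, Rplus_0_r, add_0_r. reflexivity.
Qed.

Lemma opp_eq_scal y : opp y = scal (-1) y.
Proof.
  apply (add_cancel_l y). rewrite add_opp_r.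
  rewrite <- (scal_1 _ y) at 1. rewrite <- scal_add_l.
  replace (1 + -1) with 0 by ring. symmetry; apply scal_0.
Qed.

Lemma norm_opp y : norm (opp y) = norm y.
Proof.
  rewrite opp_eq_scal, norm_scal.
  replace (-1) with (- (1)) by ring. rewrite Rabs_Ropp, Rabs_R1. ring.
Qed.

Lemma norm_nonneg y : 0 <= norm y.
Proof.
  pose proof (norm_triangle _ y (opp y)) as H.
  rewrite add_opp_r, norm_opp, (proj2 (norm_zero_iff _ zero) eq_refl) in H. lra.
Qed.

Lemma powX_S_r (a : X) (n : nat) : powX a (S n) = mul (powX a n) a.
Proof.
  induction n as [|n IH]; simpl.
  - rewrite mul_1_l, mul_1_r. reflexivity.
  - simpl in IH. rewrite IH, mul_assoc, IH. reflexivity.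
Qed.

Lemma sumX_ext (f g : nat -> X) (n : nat) :
  (forall i, (i < n)%nat -> f i = g i) -> sumX f n = sumX g n.
Proof. induction n as [|n IH]; intro H; simpl; [reflexivity | rewrite IH, H; auto]. Qed.

Lemma sumX_mul_r (f : nat -> X) y (n : nat) :
  mul (sumX f n) y = sumX (fun j => mul (f j) y) n.
Proof.
  induction n as [|n IH]; simpl; [apply mul_0_l | rewrite mul_add_l, IH; reflexivity].
Qed.

Lemma norm_sumX_mul (c y : nat -> X) (n : nat) :
  norm (sumX (fun i => mul (c i) (y i)) n) <= sumR (fun i => norm (c i) * norm (y i)) n.
Proof.
  induction n as [|n IH]; simpl.
  - rewrite (proj2 (norm_zero_iff _ zero) eq_refl); lra.
  - eapply Rle_trans; [apply norm_triangle|].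
    pose proof (norm_mul _ (c n) (y n)). lra.
Qed.

End BanachAlgebraFacts.

Section Defects.
Context {X : BanachAlgebra}.

Definition defect (a : X) (x : nat -> X) (m : nat) : X :=
  add (x (S m)) (opp (mul a (x m))).

(* c_i = b_0 a^i + b_1 a^(i-1) + ... + b_i, the coefficients in the
   hypotheses c_k = 0 and sum_{i<k} |c_i| < 1/sigma. *)
Definition char_coef (a : X) (b : nat -> X) (i : nat) : X :=
  sumX (fun j => mul (b j) (powX a (i - j))) (S i).

Lemma defect_step (a : X) (x : nat -> X) (m : nat) :
  x (S m) = add (mul a (x m)) (defect a x m).
Proof.
  unfold defect. rewrite (add_comm _ (x (S m))), add_assoc, add_opp_r, add_0_l.
  reflexivity.
Qed.

Lemma char_coef_succ (a : X) (b : nat -> X) (r : nat) :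
  char_coef a b (S r) = add (mul (char_coef a b r) a) (b (S r)).
Proof.
  unfold char_coef. change (sumX ?f (S (S r))) with (add (sumX f (S r)) (f (S r))); cbv beta.
  rewrite Nat.sub_diag, mul_1_r, sumX_mul_r. f_equal.
  apply sumX_ext. intros i Hi.
  replace (S r - i)%nat with (S (r - i)) by lia.
  rewrite powX_S_r, mul_assoc. reflexivity.
Qed.

Lemma add_shuffle (A B C D : X) :
  add (add (add A C) D) B = add (add A B) (add D C).
Proof.
  rewrite <- !add_assoc. f_equal.
  rewrite (add_comm _ D C), (add_assoc _ B C D), (add_comm _ B C), <- add_assoc. f_equal.
  apply add_comm.
Qed.

Lemma weighted_sum_by_defects (a : X) (b x : nat -> X) (r : nat) : forall m,
  sumX (fun j => mul (b j) (x (m + r - j)%nat)) (S r) =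
  add (mul (char_coef a b r) (x m))
      (sumX (fun i => mul (char_coef a b i) (defect a x (m + (r - S i))%nat)) r).
Proof.
  induction r as [|r IH]; intro m.
  - unfold char_coef. simpl. rewrite mul_1_r, !add_0_l, add_0_r.
    replace (m + 0 - 0)%nat with m by lia. reflexivity.
  - change (sumX ?f (S (S r))) with (add (sumX f (S r)) (f (S r))); cbv beta.
    rewrite (sumX_ext _ (fun j => mul (b j) (x (S m + r - j)%nat))) by
      (intros i Hi; do 2 f_equal; lia).
    rewrite IH. replace (m + S r - S r)%nat with m by lia.
    change (sumX ?f (S r)) with (add (sumX f r) (f r)); cbv beta.
    rewrite (sumX_ext (fun i => mul (char_coef a b i) (defect a x (m + (S r - S i))%nat))
                      (fun i => mul (char_coef a b i) (defect a x (S m + (r - S i))%nat))) by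
      (intros i Hi; do 2 f_equal; lia).
    replace (m + (S r - S r))%nat with m by lia.
    rewrite (defect_step a x m), char_coef_succ, mul_add_r, mul_add_l, mul_assoc.
    apply add_shuffle.
Qed.

End Defects.

(* Along a solution, the defects obey a k-step delay inequality: the
   recursion makes d_{n+k} = g_n(sum_j b_j x_{n+k-j}), and since c_k = 0 the
   argument of g_n involves only the k previous defects. *)
Lemma defect_delay_inequality (X : BanachAlgebra) (k : nat) (sigma : R)
  (g : nat -> X -> X) (a : X) (b x : nat -> X) :
  0 <= sigma ->
  (forall n xi, norm (g n xi) <= sigma * norm xi) ->
  char_coef a b k = zero ->
  (forall n, x (n + k + 1)%nat =
     add (mul a (x (n + k)%nat)) (g n (sumX (fun j => mul (b j) (x (n + k - j)%nat)) (S k)))) ->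
  forall n, norm (defect a x (n + k)) <=
    sumR (fun i => (sigma * norm (char_coef a b i)) * norm (defect a x (n + (k - S i))%nat)) k.
Proof.
  intros Hsigma hg hchar hrec n.
  assert (Hd : defect a x (n + k) = g n (sumX (fun j => mul (b j) (x (n + k - j)%nat)) (S k))).
  { unfold defect. replace (S (n + k)) with (n + k + 1)%nat by lia. rewrite hrec.
    rewrite (add_comm _ (mul a _)), <- add_assoc, add_opp_r, add_0_r. reflexivity. }
  rewrite Hd, (weighted_sum_by_defects a b x k n), hchar, mul_0_l, add_0_l.
  eapply Rle_trans; [apply hg|].
  eapply Rle_trans; [apply Rmult_le_compat_l; [exact Hsigma | apply norm_sumX_mul]|].
  rewrite <- sumR_scal_l. apply sumR_le. intros i _. right; ring.
Qed.

Theorem corollary1 (X : BanachAlgebra) (k : nat) (hk : (1 <= k)%nat)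
  (sigma : R) (hsigma : 0 < sigma) (g : nat -> X -> X)
  (hg : forall (n : nat) (xi : X), norm (g n xi) <= sigma * norm xi)
  (a : X) (ha : invertible a) (b : nat -> X) (hbk : b k <> zero)
  (ha1 : norm a < 1)
  (hchar : sumX (fun j => mul (b j) (powX a (k - j))) (S k) = zero)
  (hsum : sum_f_R0 (fun i => norm (sumX (fun j => mul (b j) (powX a (i - j))) (S i)))
            (k - 1) < 1 / sigma)
  (x : nat -> X)
  (hrec : forall n : nat,
     x (n + k + 1)%nat =
       add (mul a (x (n + k)%nat))
           (g n (sumX (fun j => mul (b j) (x (n + k - j)%nat)) (S k)))) :
  Un_cv (fun n => norm (x n)) 0.
Proof.
  assert (Hmass : sumR (fun i => sigma * norm (char_coef a b i)) k < 1).
  { rewrite sumR_scal_l.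
    rewrite sumR_sum_f_R0, Nat.sub_1_r, Nat.succ_pred_pos in hsum by lia.
    apply (Rmult_lt_compat_l sigma) in hsum; [|exact hsigma].
    replace (sigma * (1 / sigma)) with 1 in hsum by (field; lra). exact hsum. }
  assert (Hdefect : geometric_decay (fun m => norm (defect a x m))).
  { apply (delay_inequality_decay _ (fun i => sigma * norm (char_coef a b i)) k hk).
    - intro; apply norm_nonneg.
    - intro; apply Rmult_le_pos; [lra | apply norm_nonneg].
    - exact Hmass.
    - apply (defect_delay_inequality X k sigma g); [lra | exact hg | exact hchar | exact hrec]. }
  apply geometric_decay_cv; [intro; apply norm_nonneg|].
  apply (perturbed_contraction_decay _ (fun m => norm (defect a x m)) (norm a)); try (intro; apply norm_nonneg).
  - split; [apply norm_nonneg | exact ha1].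
  - exact Hdefect.
  - intro m. rewrite (defect_step a x m).
    eapply Rle_trans; [apply norm_triangle|].
    pose proof (norm_mul _ a (x m)). lra.
Qed.
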